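(* Let $u,v\in S_n$. Then $C(v)\subseteq C(u)$ (i.e. $u\le v$ in the shard intersection order) if and only if both of the following hold: (Refinement) the set partition of $\{1,\dots,n\}$ into blocks of $u$ refines the set partition into blocks of $v$; (Consistency) whenever $i<k<j$, $i$ and $j$ lie in the same block of $u$, and $k$ does not lie in that block of $u$, then either $k$ lies in the same block of $v$ as $i$ and $j$, or $k$ lies on the same side (left or right) of $i$ in $v$ as it does in $u$.
   Context: For $w=w(1)\cdots w(n)\in S_n$ (one-line notation), the blocks of $w$ are the sets of letters of its maximal decreasing runs (maximal consecutive factors $w(a)>w(a+1)>\cdots>w(b)$). Let $V=\{x\in\mathbb R^n:\sum_i x_i=0\}$. The cone $C(w)\subseteq V$ is the set of $x\in V$ such that: (i) $x_i=x_j$ whenever $i,j$ lie in the same block of $w$; (ii) whenever $i<k<j$ with $i,j$ in the same block and $k$ not in that block, $x_k\le x_i$ if $k$ appears to the left of $i$ in $w$, and $x_i\le x_k$ if $k$ appears to the right of $i$ in $w$. The shard intersection order on $S_n$: $u\le v$ iff $C(v)\subseteq C(u)$. *)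

From HB Require Import structures.
From mathcomp Require Import all_boot all_order all_algebra all_fingroup.
Set Implicit Arguments. Unset Strict Implicit. Unset Printing Implicit Defensive.
Import Order.TTheory GRing.Theory Num.Theory.

(* Conventions: a permutation w : 'S_n is read in one-line notation
   w(0) w(1) ... w(n-1); positions and letters are both in 'I_n
   (i.e. {0,...,n-1} instead of {1,...,n}). *)

Definition pos n (w : 'S_n) (a : 'I_n) : 'I_n := (w^-1)%g a.

(* letters a and b lie in the same block (maximal decreasing run) of w:
   every adjacent pair of positions between them is a descent. *)
Definition same_block n (w : 'S_n) (a b : 'I_n) : bool :=
  [forall t : 'I_n, forall t' : 'I_n,
     ((minn (pos w a) (pos w b) <= t)%N && (t' == t.+1 :> nat)
        && (t' <= maxn (pos w a) (pos w b))%N)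
     ==> (w t' < w t)%N].

(* the cone C(w) in V = { x in R^n | sum x = 0 }, coordinates indexed by letters *)
Definition in_cone (R : realFieldType) n (w : 'S_n) (x : 'I_n -> R) : Prop :=
  (\sum_(i < n) x i = 0)%R /\
  (forall i j : 'I_n, same_block w i j -> x i = x j) /\
  (forall i k j : 'I_n, (i < k)%N -> (k < j)%N -> same_block w i j ->
      ~~ same_block w k i ->
      ((pos w k < pos w i)%N -> (x k <= x i)%R) /\
      ((pos w i < pos w k)%N -> (x i <= x k)%R)).

Definition shard_le (R : realFieldType) n (u v : 'S_n) : Prop :=
  forall x : 'I_n -> R, in_cone v x -> in_cone u x.

Definition refines n (u v : 'S_n) : Prop :=
  forall a b : 'I_n, same_block u a b -> same_block v a b.

Definition consistent n (u v : 'S_n) : Prop :=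
  forall i k j : 'I_n, (i < k)%N -> (k < j)%N -> same_block u i j ->
    ~~ same_block u k i ->
    same_block v k i \/ ((pos u k < pos u i)%N <-> (pos v k < pos v i)%N).

From mathcomp Require Import all_boot all_order all_algebra all_fingroup.
From mathcomp Require Import zify.
Set Implicit Arguments. Unset Strict Implicit. Unset Printing Implicit Defensive.
Import Order.TTheory GRing.Theory Num.Theory.

(* The direction "refinement + consistency => C(v) ⊆ C(u)" is a direct check
   of the defining equalities and inequalities of C(u) on a point of C(v).

   For the converse we build, for every w, a point of C(w) that separates
   everything C(w) does not force together.  Let rank_w(a) be the number of
   ascents of w to the left of the position of letter a; it is weakly
   increasing along positions and constant exactly on the blocks of w.  The
   centred point witness_w(a) = n * rank_w(a) - sum_b rank_w(b) lies in C(w),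
   takes equal values exactly on blocks, and for letters in different blocks
   compares as their positions do.  If C(v) ⊆ C(u) then witness_v ∈ C(u):
   the equalities of C(u) give refinement and its inequalities consistency. *)

Section Ascents.
Variables (n : nat) (w : 'S_n).
Implicit Types (a b : 'I_n) (p q r : nat).

Definition ascents p q : nat :=
  \sum_(t < n) \sum_(t' < n)
     [&& t' == t.+1 :> nat, (p <= t)%N, (t' <= q)%N & (w t < w t')%N].

Lemma ascents_cat p q r : (p <= q <= r)%N ->
  ascents p r = ascents p q + ascents q r.
Proof.
move=> /andP[hpq hqr]; rewrite /ascents -big_split; apply: eq_bigr => t _.
rewrite -big_split; apply: eq_bigr => t' _ /=.
case: eqP => [->|] //=; case: (w t < w t')%N; rewrite ?andbF ?andbT //=.
case: (leqP p t); case: (leqP q t); case: (leqP t.+1 r); case: (leqP t.+1 q) => //=; lia.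
Qed.

Lemma pos_ltN a b : a != b -> (pos w a < pos w b)%N = ~~ (pos w b < pos w a)%N.
Proof.
move=> ab; rewrite -leqNgt ltn_neqAle.
suff -> : (pos w a != pos w b :> nat) by [].
by apply: contra ab => /eqP/val_inj/perm_inj ->.
Qed.

Lemma same_block_sym a b : same_block w a b = same_block w b a.
Proof. by rewrite /same_block minnC maxnC. Qed.

Lemma same_blockE a b :
  same_block w a b = (ascents (minn (pos w a) (pos w b)) (maxn (pos w a) (pos w b)) == 0).
Proof.
set p := minn _ _; set q := maxn _ _.
apply/forallP/eqP => [noasc | no_asc].
- apply: big1 => t _; apply: big1 => t' _.
  case: and4P => // -[/eqP tt' pt t'q asc].
  move: (forallP (noasc t) t') => /implyP/(_ _); rewrite pt t'q tt' eqxx => /(_ isT).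
  by rewrite ltnNge ltnW.
- move=> t; apply/forallP => t'; apply/implyP => /andP[/andP[pt /eqP tt'] t'q].
  have : ([&& t' == t.+1 :> nat, (p <= t)%N, (t' <= q)%N & (w t < w t')%N] <= 0)%N.
    rewrite -no_asc /ascents (bigD1 t) //= (bigD1 t') //= -addnA; exact: leq_addr.
  rewrite leqn0 pt t'q tt' eqxx /=.
  case: ltngtP => // /val_inj/perm_inj t't.
  by move: tt'; rewrite t't; lia.
Qed.

Definition rank a : nat := ascents 0 (pos w a).

Lemma rank_split a b : (pos w a <= pos w b)%N ->
  rank b = rank a + ascents (pos w a) (pos w b).
Proof. by move=> ab; rewrite /rank (@ascents_cat 0 (pos w a)). Qed.

Lemma rank_le a b : (pos w a <= pos w b)%N -> (rank a <= rank b)%N.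
Proof. by move=> ab; rewrite (rank_split ab) leq_addr. Qed.

Lemma same_block_rank a b : same_block w a b = (rank a == rank b).
Proof.
wlog ab : a b / (pos w a <= pos w b)%N => [sym|].
  case: (leqP (pos w a) (pos w b)) => [|/ltnW]; first exact: sym.
  by rewrite same_block_sym eq_sym; apply: sym.
rewrite same_blockE (minn_idPl ab) (maxn_idPr ab) (rank_split ab).
by rewrite -{1}[rank a]addn0 eqn_add2l eq_sym.
Qed.

Lemma rank_lt a b : ~~ same_block w a b -> (rank a < rank b)%N = (pos w a < pos w b)%N.
Proof.
rewrite same_block_rank => rab.
case: (ltnP (pos w a) (pos w b)) => [/ltnW/rank_le | /rank_le].
  by rewrite leq_eqVlt (negbTE rab).
by rewrite ltnNge => ->.
Qed.

End Ascents.

Section Witness.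
Variables (R : realFieldType) (n : nat) (w : 'S_n).
Implicit Types (a b : 'I_n).

Definition witness a : R := ((rank w a * n)%:R - (\sum_(b < n) rank w b)%:R)%R.

(* The witness lies in C(w): it is constant on blocks and monotone in position. *)
Lemma witness_in_cone : in_cone w witness.
Proof.
split; last split.
- rewrite /witness sumrB sumr_const card_ord -mulr_natr.
  under eq_bigr do rewrite natrM.
  by rewrite -mulr_suml natr_sum mul1r mulr_natr subrr.
- by move=> a b; rewrite same_block_rank /witness => /eqP ->.
- move=> a c b _ _ _ _; rewrite /witness.
  by split=> /ltnW/rank_le le_rank; rewrite lerD2r ler_nat leq_mul2r le_rank orbT.
Qed.

Lemma witness_eq a b : (witness a == witness b) = same_block w a b.
Proof.
have n_gt0 : (0 < n)%N by apply: leq_ltn_trans (ltn_ord a).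
by rewrite same_block_rank /witness (inj_eq (addIr _)) eqr_nat eqn_pmul2r.
Qed.

Lemma witness_lt a b : ~~ same_block w a b ->
  (witness a < witness b)%R = (pos w a < pos w b)%N.
Proof.
have n_gt0 : (0 < n)%N by apply: leq_ltn_trans (ltn_ord a).
by move=> /rank_lt <-; rewrite /witness ltrD2r ltr_nat ltn_pmul2r.
Qed.

End Witness.

Section ShardOrder.
Variables (R : realFieldType) (n : nat) (u v : 'S_n).

(* The equalities of C(u), evaluated at the witness of v, give refinement. *)
Lemma shard_le_refines : shard_le R u v -> refines u v.
Proof.
move=> le_uv a b sb_u; have [_ [eq_u _]] := le_uv _ (witness_in_cone R v).
by rewrite -(witness_eq R) (eq_u a b sb_u).
Qed.

(* The inequalities of C(u), evaluated at the witness of v, give consistency. *)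
Lemma shard_le_consistent : shard_le R u v -> consistent u v.
Proof.
move=> le_uv i k j ik kj sb_u nsb_u.
have [_ [_ ineq_u]] := le_uv _ (witness_in_cone R v).
have [ki_u ik_u] := ineq_u i k j ik kj sb_u nsb_u.
case: (boolP (same_block v k i)) => [|nsb_v]; [by left | right].
have nsb_v' : ~~ same_block v i k by rewrite same_block_sym.
have k_neq_i : k != i by rewrite neq_ltn ik orbT.
split=> [/ki_u | ].
- by rewrite leNgt (witness_lt R nsb_v') (pos_ltN v k_neq_i).
- rewrite -(witness_lt R nsb_v) (pos_ltN u k_neq_i) => lt_ki.
  by apply/negP => /ik_u; rewrite leNgt lt_ki.
Qed.

Lemma refines_consistent_shard_le : refines u v -> consistent u v -> shard_le R u v.
Proof.
move=> ref con x [sum0 [eq_v ineq_v]]; split; first by []; split.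
  by move=> a b /ref; apply: eq_v.
move=> i k j ik kj sb_u nsb_u.
have [sb_v | nsb_v] := boolP (same_block v k i).
  by rewrite (eq_v k i sb_v); split=> _.
have [ki_v ik_v] := ineq_v i k j ik kj (ref _ _ sb_u) nsb_v.
case: (con i k j ik kj sb_u nsb_u) => [sb_v | [ki_uv ki_vu]].
  by rewrite sb_v in nsb_v.
have i_neq_k : i != k by rewrite neq_ltn ik.
split=> [/ki_uv/ki_v // | lt_ik]; apply: ik_v.
by rewrite (pos_ltN v i_neq_k); apply/negP => /ki_vu; rewrite ltnNge ltnW.
Qed.

End ShardOrder.

Theorem mainTheorem6 (R : realFieldType) (n : nat) (u v : 'S_n) :
  shard_le R u v <-> refines u v /\ consistent u v.
Proof.
split=> [le_uv | [ref con]].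
- by split; [apply: shard_le_refines le_uv | apply: shard_le_consistent le_uv].
- exact: refines_consistent_shard_le.
Qed.
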